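(* Let $K,F$ be non-negative integers. Then there exists at least one numerical semigroup $S$ with $\mathrm{F}(S)=F$ and $\mathrm{l}(S)=K$ if and only if $K+F$ is odd and $F\ge K+1$.
   Context: A numerical semigroup is a subset $S\subseteq\mathbb{N}$ closed under addition with $0\in S$ and $\mathbb{N}\setminus S$ finite; $\mathrm{F}(S)=\max(\mathbb{Z}\setminus S)$. $\mathrm{N}(S)=\{s\in S\mid s<\mathrm{F}(S)\}$, $\mathrm{L}(S)=\{x\in\mathbb{N}\setminus S\mid \mathrm{F}(S)-x\notin \mathrm{N}(S)\}$, $\mathrm{l}(S)=\#\mathrm{L}(S)$. *)

From mathcomp Require Import all_boot.
Set Implicit Arguments. Unset Strict Implicit. Unset Printing Implicit Defensive.

Definition numerical_semigroup (S : pred nat) : Prop :=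
  [/\ S 0,
      (forall a b, S a -> S b -> S (a + b)) &
      exists N, forall n, N <= n -> S n].

(* F(S) = F for a non-negative integer F, i.e. F = max (Z \ S).
   Negative integers are never in S, so for F >= 0 this means:
   F is not in S and every integer larger than F is in S. *)
Definition frobenius_is (S : pred nat) (F : nat) : Prop :=
  ~~ S F /\ (forall n, F < n -> S n).

Definition NS (S : pred nat) (F : nat) : pred nat :=
  fun s => S s && (s < F).

(* L(S) = { x in N \ S | F(S) - x notin N(S) }; the difference F - x is an
   integer, it is negative (hence not in N(S)) exactly when F < x. *)
Definition LS (S : pred nat) (F : nat) : pred nat :=
  fun x => ~~ S x && ((F < x) || ~~ NS S F (F - x)).

Definition card_LS_is (S : pred nat) (F K : nat) : Prop :=
  exists s : seq nat, [/\ uniq s, (forall x, (x \in s) = LS S F x) & size s = K].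

(* L(S) consists of the gaps x with 0 < x < F whose reflection F - x is also a
   gap, so it is stable under x |-> F - x; its only possible fixed point F/2 is
   always a gap (otherwise F = F/2 + F/2 would lie in S).  Hence #L(S) is odd
   exactly when F is even, and L(S) fits in [1, F - 1].  Conversely, removing F
   from the ordinary semigroup {0} u [t, oo) with 2t = K + F + 1 gives
   L(S) = (F - t, t), an interval of K elements. *)

From mathcomp Require Import all_boot.
From mathcomp Require Import zify.

Set Implicit Arguments.
Unset Strict Implicit.
Unset Printing Implicit Defensive.

Lemma odd_size_reflection_stable (F : nat) (s : seq nat) :
  uniq s -> (forall x, x \in s -> x <= F) -> (forall x, x \in s -> F - x \in s) ->
  odd (size s) = ~~ odd F && (F./2 \in s).
Proof.
move=> s_uniq s_le s_refl.
have perm_refl : perm_eq [seq F - x | x <- s] s.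
  apply: uniq_perm => //.
    by rewrite map_inj_in_uniq // => x y /s_le x_le /s_le y_le; lia.
  move=> y; apply/mapP/idP => [[x /s_refl ? ->] // | ys].
  by exists (F - y); [exact: s_refl | have := s_le _ ys; lia].
have count_hi : count (fun x => F < 2 * x) s = count (fun x => 2 * x < F) s.
  rewrite -(permP perm_refl) count_map; apply: eq_in_count => x /s_le.
  by rewrite /=; lia.
have size_split : size s = count (fun x => 2 * x < F) s
    + count (fun x => 2 * x == F) s + count (fun x => F < 2 * x) s.
  by elim: (s) => //= x r ->; case: ltngtP => _; lia.
have count_mid : count (fun x => 2 * x == F) s = ~~ odd F && (F./2 \in s).
  case: (boolP (odd F)) => /= [odd_F | even_F].
    rewrite (@eq_count _ _ pred0) ?count_pred0 // => x /=.
    by apply: contraTF odd_F => /eqP <-; rewrite oddM.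
  by rewrite -(count_uniq_mem _ s_uniq); apply: eq_count => x /=; lia.
rewrite size_split count_hi count_mid addnAC addnn oddD odd_double.
by case: (_ && _).
Qed.

Section GapsOfL.

Variables (S : pred nat) (F : nat).
Hypotheses (S0 : S 0) (S_frob : frobenius_is S F).

Lemma LSE x : LS S F x = [&& x < F, ~~ S x & ~~ S (F - x)].
Proof.
have [SF S_gtF] := S_frob; rewrite /LS /NS.
case: (ltnP F x) => [lt_Fx | le_xF]; first by rewrite S_gtF // andbF.
have [-> | x_gt0] := posnP x; first by rewrite S0 /= andbF.
case: (ltnP x F) => [lt_xF | le_Fx] /=.
  have -> : F - x < F by lia.
  by rewrite andbT.
have -> : F - x = 0 by lia.
by rewrite S0 (leq_trans x_gt0 le_xF) andbF.
Qed.

Lemma frobenius_gt0 : 0 < F.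
Proof. by have [SF _] := S_frob; rewrite lt0n; apply: contraNneq SF => ->. Qed.

Lemma LS_bounds x : LS S F x -> 0 < x < F.
Proof.
rewrite LSE => /and3P [lt_xF Sx _]; rewrite lt_xF andbT lt0n.
by apply: contraNneq Sx => ->.
Qed.

Lemma LS_reflect x : LS S F x -> LS S F (F - x).
Proof.
move=> Lx; have /andP [x_gt0 lt_xF] := LS_bounds Lx.
move: Lx; rewrite !LSE => /and3P [_ Sx SFx].
by rewrite (subKn (ltnW lt_xF)) Sx SFx !andbT; lia.
Qed.

Lemma LS_half : (forall a b, S a -> S b -> S (a + b)) -> ~~ odd F -> LS S F F./2.
Proof.
move=> S_add even_F; have [SF _] := S_frob.
have F_half : F./2 + F./2 = F by rewrite addnn -[RHS]odd_double_half (negbTE even_F).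
have S_half : ~~ S F./2 by apply: contra SF => Sh; rewrite -F_half S_add.
have F_sub_half : F - F./2 = F./2 by rewrite -{1}F_half addnK.
have F_gt0 := frobenius_gt0.
by rewrite LSE F_sub_half S_half; lia.
Qed.

End GapsOfL.

Definition ordinary_remove (t F : nat) : pred nat :=
  fun n => (n == 0) || (t <= n) && (n != F).

Section OrdinaryRemove.

Variables (t F : nat).
Hypotheses (le_tF : t <= F) (lt_F_2t : F < 2 * t).

Lemma ordinary_remove_numerical : numerical_semigroup (ordinary_remove t F).
Proof.
split=> [// | a b | ]; last by exists F.+1 => n le_Fn; rewrite /ordinary_remove; lia.
rewrite /ordinary_remove.
by case: (posnP a) => [-> | ?]; case: (posnP b) => [-> | ?]; rewrite ?addn0 //=; lia.
Qed.

Lemma ordinary_remove_frobenius : frobenius_is (ordinary_remove t F) F.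
Proof. by split=> [|n]; rewrite /ordinary_remove; lia. Qed.

Lemma LS_ordinary_remove x : LS (ordinary_remove t F) F x = (F - t < x < t).
Proof.
rewrite LSE //; last exact: ordinary_remove_frobenius.
by rewrite /ordinary_remove; lia.
Qed.

End OrdinaryRemove.

Theorem proposition37 (K F : nat) :
  (exists S : pred nat,
      [/\ numerical_semigroup S, frobenius_is S F & card_LS_is S F K])
  <-> (odd (K + F) /\ K + 1 <= F).
Proof.
split=> [[S [[S0 S_add _] S_frob [s [s_uniq s_LS <-]]]] | [odd_KF le_KF]].
  have F_gt0 := frobenius_gt0 S0 S_frob.
  have s_bounds x : x \in s -> 0 < x < F by rewrite s_LS; apply: LS_bounds.
  split.
    rewrite oddD (odd_size_reflection_stable (F := F) s_uniq) => [| x /s_bounds | x].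
    - by case: (boolP (odd F)) => //= even_F; rewrite s_LS LS_half.
    - by case/andP => _ /ltnW.
    - by rewrite !s_LS; apply: LS_reflect.
  have : size s <= size (iota 1 F.-1).
    by apply: uniq_leq_size => // x /s_bounds; rewrite mem_iota; lia.
  by rewrite size_iota; lia.
have [t two_t] : exists t, 2 * t = K + F + 1.
  by exists (K + F).+1./2; rewrite mul2n -[RHS]odd_double_half addn1 /= odd_KF.
have le_tF : t <= F by lia.
have lt_F_2t : F < 2 * t by lia.
exists (ordinary_remove t F); split.
- exact: ordinary_remove_numerical.
- exact: ordinary_remove_frobenius.
- exists (iota (F - t).+1 K); split=> [| x |]; rewrite ?iota_uniq ?size_iota //.
  by rewrite mem_iota LS_ordinary_remove //; lia.
Qed.
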